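(* Let $F:\mathcal{P}(V,A)\to S_2(A)$ be a consular election rule satisfying SPP and SPO. Then $F$ is reducible if and only if its range graph $\mathcal{G}(F)$ is bipartite.
   Context: $V$ is a finite nonempty set of voters, $A$ a finite set of alternatives; a profile $P$ assigns to each voter $i$ a linear order $P_i$ on $A$; $P_i'P_{-i}$ replaces voter $i$'s order by $P_i'$; $P|_B$ is the profile of restrictions to $B\subseteq A$. $S_2(A)$ is the set of 2-element subsets of $A$; a consular election rule is a map $F:\mathcal{P}(V,A)\to S_2(A)$. SPO: for all $P$, $i$, $P_i'$, $\mathrm{best}(P_i,F(P))\succeq_i\mathrm{best}(P_i,F(P_i'P_{-i}))$; SPP: same with $\mathrm{worst}$, where $\mathrm{best}(P_i,W)$, $\mathrm{worst}(P_i,W)$ are the $P_i$-best and $P_i$-worst elements of $W$. $F$ is reducible if there is a partition $A=B\uplus C$ and social choice functions $G:\mathcal{P}(V,B)\to B$, $H:\mathcal{P}(V,C)\to C$ with $F(P)=\{G(P|_B),H(P|_C)\}$ for all $P$. The range graph $\mathcal{G}(F)$ has vertex set $A$ and edge set equal to the range of $F$. *)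

From mathcomp Require Import all_boot.
Set Implicit Arguments. Unset Strict Implicit. Unset Printing Implicit Defensive.

(* A (strict) linear order on T: [lo x y] means "x is ranked strictly above y"
   (x is preferred to y). *)
Record linord (T : eqType) := LinOrd {
  lo :> rel T;
  lo_irr : forall x, ~~ lo x x;
  lo_trans : forall x y z, lo x y -> lo y z -> lo x z;
  lo_total : forall x y, x != y -> lo x y || lo y x
}.

Definition weakpref (T : eqType) (R : linord T) (x y : T) : Prop := x = y \/ R x y.

Definition profile (V : finType) (T : eqType) := V -> linord T.

Definition update (V : finType) (T : eqType) (P : profile V T) (i : V) (Pi' : linord T)
  : profile V T := fun j => if j == i then Pi' else P j.

Section Restrict.
Variables (A : finType) (B : {set A}).
Definition sub_of := {x : A | x \in B}.
Definition restr_rel (R : linord A) : rel sub_of := fun x y => R (val x) (val y).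
Lemma restr_irr R x : ~~ restr_rel R x x.
Proof. exact: lo_irr. Qed.
Lemma restr_trans R x y z : restr_rel R x y -> restr_rel R y z -> restr_rel R x z.
Proof. exact: lo_trans. Qed.
Lemma restr_total R x y : x != y -> restr_rel R x y || restr_rel R y x.
Proof. by move=> hxy; apply: lo_total; rewrite (inj_eq val_inj). Qed.
Definition restr_lo (R : linord A) : linord sub_of :=
  LinOrd (@restr_irr R) (@restr_trans R) (@restr_total R).
End Restrict.

Definition restr_profile (V A : finType) (P : profile V A) (B : {set A})
  : profile V (sub_of B) := fun i => restr_lo B (P i).

Definition is_best (A : finType) (R : linord A) (W : {set A}) (x : A) : Prop :=
  x \in W /\ forall y, y \in W -> y != x -> R x y.
Definition is_worst (A : finType) (R : linord A) (W : {set A}) (x : A) : Prop :=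
  x \in W /\ forall y, y \in W -> y != x -> R y x.

Definition consular (V A : finType) (F : profile V A -> {set A}) : Prop :=
  forall P, #|F P| = 2.

Definition SPO (V A : finType) (F : profile V A -> {set A}) : Prop :=
  forall P i Pi' x y, is_best (P i) (F P) x -> is_best (P i) (F (update P i Pi')) y ->
    weakpref (P i) x y.

Definition SPP (V A : finType) (F : profile V A -> {set A}) : Prop :=
  forall P i Pi' x y, is_worst (P i) (F P) x -> is_worst (P i) (F (update P i Pi')) y ->
    weakpref (P i) x y.

Definition reducible (V A : finType) (F : profile V A -> {set A}) : Prop :=
  exists (B C : {set A}), [/\ B :|: C = [set: A], [disjoint B & C] &
    exists (G : profile V (sub_of B) -> sub_of B) (H : profile V (sub_of C) -> sub_of C),
      forall P, F P = [set val (G (restr_profile P B)); val (H (restr_profile P C))]].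

Definition range_edge (V A : finType) (F : profile V A -> {set A}) (W : {set A}) : Prop :=
  exists P, F P = W.

Definition bipartite (A : finType) (E : {set A} -> Prop) : Prop :=
  exists c : A -> bool, forall W, E W ->
    forall x y, x \in W -> y \in W -> x != y -> c x != c y.

Definition range_graph_bipartite (V A : finType) (F : profile V A -> {set A}) : Prop :=
  bipartite (range_edge F).

From mathcomp Require Import all_boot.
From Stdlib Require Import ClassicalEpsilon FunctionalExtensionality.

(* A reducible rule is bipartite: colour each alternative by the block of the
   partition containing it.  Conversely, a 2-colouring [c] of the range graph
   splits every outcome into one alternative of each colour, the k-delegate of
   the profile.  Combining SPO and SPP on a test profile, a voter switching
   from [P_i] to [Q] can only move the k-delegate weakly up in [Q]; applying
   this in both directions, the k-delegate does not move when the two orders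
   agree on the colour class k.  Changing voters one at a time, the k-delegate
   therefore depends only on the restriction of the profile to that class,
   which yields the two social choice functions. *)

Set Implicit Arguments. Unset Strict Implicit. Unset Printing Implicit Defensive.

Section WeakPreference.
Variables (T : eqType) (R : linord T).

Lemma weakprefP x y : reflect (weakpref R x y) ((x == y) || R x y).
Proof. by apply: (iffP orP) => -[/eqP|]; by [left | right]. Qed.

Lemma weakpref_trans x y z : weakpref R x y -> weakpref R y z -> weakpref R x z.
Proof.
case=> [->//|Rxy] [<-|Ryz]; first by right.
by right; apply: lo_trans Rxy Ryz.
Qed.

Lemma weakpref_antisym x y : weakpref R x y -> weakpref R y x -> x = y.
Proof.
case=> [//|Rxy] [//|Ryx].
by have := lo_irr R x; rewrite (lo_trans Rxy Ryx).
Qed.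

End WeakPreference.

Section BestWorst.
Variables (A : finType) (R : linord A).

Lemma is_best_weakpref (W : {set A}) x y :
  is_best R W x -> y \in W -> weakpref R x y.
Proof.
by case=> _ bx yW; case: (eqVneq y x) => [->|nyx]; [left | right; apply: bx].
Qed.

Lemma is_worst_weakpref (W : {set A}) x y :
  is_worst R W x -> y \in W -> weakpref R y x.
Proof.
by case=> _ wx yW; case: (eqVneq y x) => [->|nyx]; [left | right; apply: wx].
Qed.

Lemma set2_best_worst x y :
  R x y -> is_best R [set x; y] x /\ is_worst R [set x; y] y.
Proof.
move=> Rxy; have nxy : x != y by apply: contraTneq Rxy => ->; apply: lo_irr.
split; split; rewrite ?inE ?eqxx ?orbT // => z; rewrite !inE.
- by case/orP=> /eqP->; rewrite ?eqxx.
- by case/orP=> /eqP->; rewrite ?eqxx // eq_sym nxy.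
Qed.

Lemma card2_best_worst (W : {set A}) :
  #|W| = 2 -> exists x y, is_best R W x /\ is_worst R W y.
Proof.
move/eqP/cards2P=> [x [y [nxy ->]]].
case/orP: (lo_total R nxy) => [Rxy|Ryx].
- by exists x, y; apply: set2_best_worst.
- by exists y, x; rewrite setUC; apply: set2_best_worst.
Qed.

End BestWorst.

Section Prefer.
Variable A : finType.

Definition prefer_rel (s : seq A) : rel A :=
  fun x y => index x (s ++ enum A) < index y (s ++ enum A).

Lemma prefer_irr s x : ~~ prefer_rel s x x.
Proof. by rewrite /prefer_rel ltnn. Qed.

Lemma prefer_trans s x y z : prefer_rel s x y -> prefer_rel s y z -> prefer_rel s x z.
Proof. exact: ltn_trans. Qed.

Lemma prefer_total s x y : x != y -> prefer_rel s x y || prefer_rel s y x.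
Proof.
have mem z : z \in s ++ enum A by rewrite mem_cat mem_enum orbT.
move=> nxy; rewrite /prefer_rel -neq_ltn; apply: contra nxy.
by move/eqP/(index_inj x (mem x) (mem y))->.
Qed.

Definition prefer s : linord A :=
  LinOrd (@prefer_irr s) (@prefer_trans s) (@prefer_total s).

Lemma prefer_prefix p s x y : weakpref (prefer (p ++ s)) x y -> y \in p -> x \in p.
Proof.
case=> [->//|]; rewrite /= /prefer_rel -catA !index_cat => + yp; rewrite yp.
have ylt : index y p < size p by rewrite index_mem.
by case: ifP => // _; rewrite ltnNge (leq_trans (ltnW ylt)) ?leq_addr.
Qed.

End Prefer.

Section Update.
Variables (V : finType) (T : eqType) (P : profile V T) (i : V).

Lemma update_at R : update P i R i = R.
Proof. by rewrite /update eqxx. Qed.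

Lemma update_id : update P i (P i) = P.
Proof.
by apply: functional_extensionality => j; rewrite /update; case: eqP => // ->.
Qed.

Lemma update_update R R' : update (update P i R) i R' = update P i R'.
Proof. by apply: functional_extensionality => j; rewrite /update; case: eqP. Qed.

End Update.

Section StrategyProofness.
Variables (V A : finType) (F : profile V A -> {set A}).
Hypotheses (Fcons : consular F) (Fspo : SPO F) (Fspp : SPP F).

Lemma SPO_dominated P i Q y : y \in F (update P i Q) ->
  exists2 x, x \in F P & weakpref (P i) x y.
Proof.
move=> yF.
have [x [_ [bx _]]] := card2_best_worst (P i) (Fcons P).
have [x' [_ [bx' _]]] := card2_best_worst (P i) (Fcons (update P i Q)).
exists x; first exact: bx.1.
have xx' : weakpref (P i) x x' := Fspo bx bx'.
exact: weakpref_trans xx' (is_best_weakpref bx' yF).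
Qed.

Lemma SPP_dominating P i Q x : x \in F P ->
  exists2 y, y \in F (update P i Q) & weakpref (P i) x y.
Proof.
move=> xF.
have [_ [w [_ wP]]] := card2_best_worst (P i) (Fcons P).
have [_ [w' [_ wP']]] := card2_best_worst (P i) (Fcons (update P i Q)).
exists w'; first exact: wP'.1.
have ww' : weakpref (P i) w w' := Fspp wP wP'.
exact: weakpref_trans (is_worst_weakpref wP xF) ww'.
Qed.

End StrategyProofness.

Section Delegates.
Variables (V A : finType) (F : profile V A -> {set A}).
Hypotheses (Fcons : consular F) (Fspo : SPO F) (Fspp : SPP F).
Variable c : A -> bool.
Hypothesis c_proper : forall P x y, x \in F P -> y \in F P -> x != y -> c x != c y.

Lemma exists_delegate k P : exists x, (x \in F P) && (c x == k).
Proof.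
have /cards2P[x [y [nxy FP]]] : #|F P| == 2 by rewrite Fcons.
have xF : x \in F P by rewrite FP !inE eqxx.
have yF : y \in F P by rewrite FP !inE eqxx orbT.
have cxy := c_proper xF yF nxy.
have [cx|cxk] := eqVneq (c x) k; [exists x | exists y].
  by rewrite xF cx eqxx.
by rewrite yF; move: cxy cxk; case: (c x); case: (c y); case: k.
Qed.

Definition delegate k P : A := xchoose (exists_delegate k P).

Lemma delegate_mem k P : delegate k P \in F P.
Proof. by have /andP[] := xchooseP (exists_delegate k P). Qed.

Lemma delegate_colour k P : c (delegate k P) = k.
Proof. by have /andP[_ /eqP] := xchooseP (exists_delegate k P). Qed.

Lemma delegate_uniq k P x : x \in F P -> c x = k -> x = delegate k P.
Proof.
move=> xF cx; apply/eqP/(contraTT (c_proper xF (delegate_mem k P))).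
by rewrite cx delegate_colour eqxx.
Qed.

Lemma delegateP k P x : x \in F P -> x = delegate k P \/ x = delegate (~~ k) P.
Proof.
move=> xF; have [cx|cx] := eqVneq (c x) k; first by left; apply: delegate_uniq.
by right; apply: delegate_uniq => //; move: cx; case: (c x); case: k.
Qed.

Lemma delegate_neq k P P' : delegate (~~ k) P != delegate k P'.
Proof.
by apply/eqP => /(congr1 c); rewrite !delegate_colour => /Bool.no_fixpoint_negb.
Qed.

Lemma delegatesE k P : F P = [set delegate k P; delegate (~~ k) P].
Proof.
apply/eqP; rewrite eq_sym eqEcard cards2 Fcons ltnS lt0b; apply/andP; split.
  by apply/subsetP => x; rewrite !inE => /orP[]/eqP->; apply: delegate_mem.
by rewrite eq_sym delegate_neq.
Qed.

Lemma delegate_update_mono k P i Q :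
  weakpref Q (delegate k (update P i Q)) (delegate k P).
Proof.
set P' := update P i Q; set b := delegate k P; set b' := delegate k P'.
set a' := delegate (~~ k) P'.
apply/weakprefP/negPn/negP => /weakprefP not_b'b.
(* Let voter i rank b, b', a' on top.  Starting from P, SPO keeps b elected;
   starting from P', SPP forces the partner of b to be a'. *)
set Q' := prefer [:: b; b'; a']; pose P'' := update P i Q'.
have P'_i : P' i = Q := update_at P i Q.
have P''_i : P'' i = Q' := update_at P i Q'.
have P''_P : update P'' i (P i) = P by rewrite update_update update_id.
have P''_P' : update P'' i Q = P' := update_update P i Q' Q.
have P'_P'' : update P' i Q' = P'' := update_update P i Q Q'.
have b_P'' : delegate k P'' = b.
  have bF : b \in F (update P'' i (P i)) by rewrite P''_P delegate_mem.
  have [x xF] := SPO_dominated Fcons Fspo bF; rewrite P''_i.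
  move=> /(prefer_prefix (p := [:: b]) (s := [:: b'; a'])).
  rewrite mem_head inE => /(_ isT) /eqP xb; subst x.
  by apply/esym/delegate_uniq; rewrite ?delegate_colour.
have a'_P'' : delegate (~~ k) P'' = a'.
  have [y yF] := SPP_dominating Fcons Fspp i Q (delegate_mem (~~ k) P'').
  rewrite P''_P' in yF.
  have y_top : y \in [:: b; b'; a'].
    by case: (delegateP k yF) => ->; rewrite !inE eqxx ?orbT.
  rewrite P''_i => /(prefer_prefix (p := [:: b; b'; a']) (s := [::]))/(_ y_top).
  by rewrite !inE !(negbTE (delegate_neq _ _ _)) => /eqP.
have a'b : weakpref Q a' b.
  have bF : b \in F (update P' i Q') by rewrite P'_P'' -b_P'' delegate_mem.
  by have [x /(delegateP k) [] -> //] := SPO_dominated Fcons Fspo bF; rewrite P'_i.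
have [y] := SPP_dominating Fcons Fspp i Q' (delegate_mem k P'); rewrite P'_P'' P'_i.
case/(delegateP k) => ->; rewrite ?b_P'' ?a'_P''; first exact: not_b'b.
by move=> b'a'; apply: not_b'b (weakpref_trans b'a' a'b).
Qed.

Definition agree_on_colour k (R R' : linord A) :=
  forall x y, c x = k -> c y = k -> R x y = R' x y.

Lemma delegate_update_agree k P i Q :
  agree_on_colour k (P i) Q -> delegate k (update P i Q) = delegate k P.
Proof.
move=> PiQ; set P' := update P i Q.
have b'b : weakpref Q (delegate k P') (delegate k P) := delegate_update_mono _ _ _ _.
have bb' : weakpref (P i) (delegate k P) (delegate k P').
  by have := delegate_update_mono k P' i (P i); rewrite update_update update_id.
apply: weakpref_antisym b'b _; case: bb' => [->|]; first by left.
by move=> Pidd'; right; rewrite -PiQ ?delegate_colour.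
Qed.

Lemma delegate_agree k P P' :
  (forall j, agree_on_colour k (P j) (P' j)) -> delegate k P' = delegate k P.
Proof.
move=> PP'.
pose mix (s : seq V) : profile V A := fun j => if j \in s then P' j else P j.
have mix_cons j s : mix (j :: s) = update (mix s) j (P' j).
  apply: functional_extensionality => l.
  by rewrite /mix /update inE; case: eqP => [->|].
have mix_enum : mix (enum V) = P'.
  by apply: functional_extensionality => j; rewrite /mix mem_enum.
suff mixE s : delegate k (mix s) = delegate k P by rewrite -mix_enum mixE.
elim: s => [|j s IHs]; first by congr delegate; apply: functional_extensionality.
rewrite mix_cons delegate_update_agree // /mix.
by case: ifP => _ x y cx cy; rewrite ?PP'.
Qed.

Definition colour_class k := [set x | c x == k].

Lemma delegate_in_class k P : delegate k P \in colour_class k.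
Proof. by rewrite inE delegate_colour. Qed.

Lemma delegate_restr k P P' :
  restr_profile P (colour_class k) = restr_profile P' (colour_class k) ->
  delegate k P = delegate k P'.
Proof.
move=> PP'; symmetry; apply: delegate_agree => j x y cx cy.
have xk : x \in colour_class k by rewrite inE cx.
have yk : y \in colour_class k by rewrite inE cy.
exact: (congr1 (fun R : profile V (sub_of (colour_class k)) =>
  (R j : rel _) (exist _ x xk) (exist _ y yk)) PP').
Qed.

Lemma delegate_factor k :
  exists G : profile V (sub_of (colour_class k)) -> sub_of (colour_class k),
    forall P, val (G (restr_profile P (colour_class k))) = delegate k P.
Proof.
pose lift Q := epsilon (inhabits (fun _ : V => prefer [::]))
  (fun P => restr_profile P (colour_class k) = Q).
exists (fun Q => exist _ (delegate k (lift Q)) (delegate_in_class k (lift Q))) => P /=.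
apply: delegate_restr.
exact: (epsilon_spec _ (fun P' => restr_profile P' _ = _) (ex_intro _ P erefl)).
Qed.

End Delegates.

Lemma reducible_bipartite (V A : finType) (F : profile V A -> {set A}) :
  reducible F -> bipartite (range_edge F).
Proof.
case=> B [C [_ BC [G [H FE]]]]; exists (fun x => x \in B) => _ [P <-] x y.
have GB := valP (G (restr_profile P B)).
have HnB := disjointFl BC (valP (H (restr_profile P C))).
by rewrite FE !inE => /orP[]/eqP-> /orP[]/eqP->; rewrite ?eqxx //= GB HnB.
Qed.

Lemma bipartite_reducible (V A : finType) (F : profile V A -> {set A}) :
  consular F -> SPP F -> SPO F -> bipartite (range_edge F) -> reducible F.
Proof.
move=> Fcons Fspp Fspo [c c_bipartite].
have c_proper P x y : x \in F P -> y \in F P -> x != y -> c x != c y.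
  by apply: c_bipartite; exists P.
have [G GE] := delegate_factor Fcons Fspo Fspp c_proper true.
have [H HE] := delegate_factor Fcons Fspo Fspp c_proper false.
exists (colour_class c true), (colour_class c false); split.
- by apply/setP => x; rewrite !inE; case: (c x).
- by rewrite -setI_eq0; apply/eqP/setP => x; rewrite !inE; case: (c x).
- by exists G, H => P; rewrite GE HE (delegatesE Fcons c_proper true).
Qed.

Theorem corollary27 (V A : finType) (F : profile V A -> {set A}) :
  0 < #|V| -> consular F -> SPP F -> SPO F ->
  (reducible F <-> bipartite (range_edge F)).
Proof.
move=> _ Fcons Fspp Fspo; split; first exact: reducible_bipartite.
exact: bipartite_reducible.
Qed.
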